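(* Let $i\ge1$ and $i+2\le s\le r$, and let $\mathcal H$ be an $s$-graph with $\Delta_i(\mathcal H)\le\binom{r-i}{s-i}$. If $\mathcal H(I)\cong K^{(s-i)}_{r-i}$ for every $I\in\partial_i(\mathcal H)$, then $\mathcal H$ is a packing shadow $\partial_sP(i,r)$, i.e. $\mathcal H=\partial_s(\mathcal A)$ for some $P(i,r)$ $\mathcal A$.
   Context: An $s$-graph is a family of $s$-subsets (edges) of a vertex set $V$. For $|I|=i<s$, $\mathcal H(I)=\{E\setminus I: I\subseteq E\in\mathcal H\}$, an $(s-i)$-graph whose vertex set is the union of its edges; $d_{\mathcal H}(I)$ is the number of edges containing $I$, and $\Delta_i(\mathcal H)=\max_{|I|=i}d_{\mathcal H}(I)$. $\partial_q(\mathcal A)=\bigcup_{A\in\mathcal A}\binom{A}{q}$. $K^{(a)}_b$ is the complete $a$-graph on $b$ vertices. A $P(i,r)$ is a family of $r$-sets any two distinct members of which share fewer than $i$ elements; a packing shadow $\partial_sP(i,r)$ is the $s$-shadow of some $P(i,r)$. *)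

From mathcomp Require Import all_boot.
Set Implicit Arguments. Unset Strict Implicit. Unset Printing Implicit Defensive.

Definition uniform (T : finType) (s : nat) (H : {set {set T}}) : Prop :=
  forall E, E \in H -> #|E| = s.

Definition link (T : finType) (H : {set {set T}}) (I : {set T}) : {set {set T}} :=
  [set E :\: I | E in [set E in H | I \subset E]].

Definition vtx (T : finType) (F : {set {set T}}) : {set T} := \bigcup_(E in F) E.

Definition deg (T : finType) (H : {set {set T}}) (I : {set T}) : nat :=
  #|[set E in H | I \subset E]|.

Definition maxdeg_le (T : finType) (H : {set {set T}}) (i b : nat) : Prop :=
  forall I : {set T}, #|I| = i -> deg H I <= b.

Definition shadow (T : finType) (q : nat) (A : {set {set T}}) : {set {set T}} :=
  [set S : {set T} | (#|S| == q) && [exists B in A, S \subset B]].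

(* F (with vertex set vtx F) is isomorphic to the complete a-graph K^(a)_b:
   a bijection between vtx F and {0,...,b-1} mapping the edges of F
   exactly onto the a-subsets of 'I_b. *)
Definition iso_complete (T : finType) (F : {set {set T}}) (a b : nat) : Prop :=
  exists f : T -> 'I_b,
    {in vtx F &, injective f} /\ f @: vtx F = [set: 'I_b] /\
    [set f @: (E : {set T}) | E in F] = [set X : {set 'I_b} | #|X| == a].

Definition packing (T : finType) (i r : nat) (A : {set {set T}}) : Prop :=
  (forall B, B \in A -> #|B| = r) /\
  (forall B C, B \in A -> C \in A -> B != C -> #|B :&: C| < i).

(** Fix an [i]-set [I] of the shadow of [H] and put [hull I := I ∪ V(H(I))],
    an [r]-set since [H(I)] is a complete [(s-i)]-graph on [r-i] vertices; every
    [s]-subset of [hull I] through [I] is an edge.  Exchanging one vertex of [I]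
    for a vertex [b] of [V(H(I))] gives an [i]-set [I'] of the shadow with the
    same hull: because [s - i >= 2], for every [x] of [hull I] some edge contains
    [I ∪ {b, x}], so [hull I ⊆ hull I'], and both have [r] elements.  Iterating,
    every [i]-subset [J] of [hull I] lies in the shadow and [hull J = hull I].
    Hence two distinct hulls share fewer than [i] vertices, and [H] is the
    [s]-shadow of the family of hulls. *)
From mathcomp Require Import all_boot.
From mathcomp Require Import zify.
Set Implicit Arguments. Unset Strict Implicit. Unset Printing Implicit Defensive.

Section FinsetFacts.
Variable T : finType.

Lemma exists_subset_between (Z V : {set T}) k :
  Z \subset V -> #|Z| <= k <= #|V| ->
  exists Y : {set T}, [/\ Z \subset Y, Y \subset V & #|Y| = k].
Proof.
move=> sZV; elim: k => [|k IHk] /andP[leZk lekV].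
  by exists Z; split=> //; apply/eqP; rewrite -leqn0.
have [eqZk|ltZk] := eqVneq #|Z| k.+1; first by exists Z.
have [Y [sZY sYV cardY]] : exists Y : {set T}, [/\ Z \subset Y, Y \subset V & #|Y| = k].
  by apply: IHk; lia.
have [x] : exists x, x \in V :\: Y.
  by apply/set0Pn; rewrite -card_gt0 cardsD (setIidPr sYV) cardY; lia.
rewrite inE => /andP[xNY xV].
exists (x |: Y); split; first exact: subset_trans sZY (subsetU1 _ _).
  by rewrite subUset sub1set xV.
by rewrite cardsU1 xNY cardY.
Qed.

Lemma exists_subset_card (X : {set T}) k :
  k <= #|X| -> exists J : {set T}, J \subset X /\ #|J| = k.
Proof.
move=> lekX; have [|J [_ sJX cardJ]] := @exists_subset_between set0 X k (sub0set X).
  by rewrite cards0.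
by exists J.
Qed.

Lemma imset_in_inj (rT : finType) (f : T -> rT) (A Y E : {set T}) :
  {in A &, injective f} -> Y \subset A -> E \subset A -> f @: Y = f @: E -> Y = E.
Proof.
move=> injf sYA sEA eqYE.
have memf (D : {set T}) x : D \subset A -> x \in A -> (f x \in f @: D) = (x \in D).
  move=> sDA xA; apply/imsetP/idP => [[y yD /injf fxy]|]; last by exists x.
  by rewrite fxy // (subsetP sDA).
apply/setP=> x; have [xA|xNA] := boolP (x \in A).
  by rewrite -(memf Y) // -(memf E) // eqYE.
by apply/idP/idP => [/(subsetP sYA)|/(subsetP sEA)]; rewrite (negbTE xNA).
Qed.

End FinsetFacts.

Section Links.
Variables (T : finType) (H : {set {set T}}).

Lemma linkP (I Y : {set T}) :
  reflect (exists F, [/\ F \in H, I \subset F & Y = F :\: I]) (Y \in link H I).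
Proof.
apply: (iffP imsetP) => [[F]|[F [FH sIF ->]]]; last by exists F; rewrite // inE FH.
by rewrite inE => /andP[FH sIF] ->; exists F.
Qed.

Lemma vtx_linkP (I : {set T}) x :
  reflect (exists F, [/\ F \in H, I \subset F, x \in F & x \notin I])
          (x \in vtx (link H I)).
Proof.
apply: (iffP bigcupP) => [[_ /linkP[F [FH sIF ->]]]|[F [FH sIF xF xNI]]].
  by rewrite inE => /andP[xNI xF]; exists F.
by exists (F :\: I); [apply/linkP; exists F | rewrite inE xNI].
Qed.

Lemma notin_vtx_link (I : {set T}) x : x \in vtx (link H I) -> x \notin I.
Proof. by case/vtx_linkP=> F []. Qed.

Lemma card_setU_vtx_link (I Y : {set T}) :
  Y \subset vtx (link H I) -> #|I :|: Y| = #|I| + #|Y|.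
Proof.
move=> sYV; apply/eqP; rewrite (leq_card_setU I Y).2.
rewrite disjoint_sym disjoint_subset.
by apply/subsetP=> x /(subsetP sYV) /notin_vtx_link.
Qed.

Lemma shadowP i (I : {set T}) :
  reflect (#|I| = i /\ exists2 B, B \in H & I \subset B) (I \in shadow i H).
Proof.
rewrite inE; apply: (iffP andP) => [[/eqP cardI /exists_inP]|[cardI BHI]].
  by split.
by split; [apply/eqP | apply/exists_inP].
Qed.

End Links.

Section IsoComplete.
Variables (T : finType) (F : {set {set T}}) (a b : nat).
Hypothesis isoF : iso_complete F a b.

Lemma card_vtx_iso_complete : #|vtx F| = b.
Proof.
by case: isoF => f [injf [imf _]]; rewrite -(card_in_imset injf) imf cardsT card_ord.
Qed.

Lemma mem_iso_complete (Y : {set T}) : Y \subset vtx F -> #|Y| = a -> Y \in F.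
Proof.
case: isoF => f [injf [_ edgesf]] sYV cardY.
have : f @: Y \in [set X : {set 'I_b} | #|X| == a].
  rewrite inE card_in_imset ?cardY // => x y xY yY.
  by apply: injf; apply: (subsetP sYV).
rewrite -edgesf => /imsetP[E EF eqYE].
by rewrite (imset_in_inj injf sYV _ eqYE) //; apply: bigcup_sup.
Qed.

End IsoComplete.

Section PackingShadow.
Variables (T : finType) (i s r : nat) (H : {set {set T}}).
Hypotheses (le_i2_s : i + 2 <= s) (le_s_r : s <= r).
Hypothesis link_complete : forall I : {set T},
  I \in shadow i H -> iso_complete (link H I) (s - i) (r - i).

Definition hull (I : {set T}) : {set T} := I :|: vtx (link H I).

Lemma card_hull (I : {set T}) : I \in shadow i H -> #|hull I| = r.
Proof.
move=> IH; have [cardI _] := shadowP _ _ _ IH.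
rewrite (card_setU_vtx_link (subxx _)) cardI (card_vtx_iso_complete (link_complete IH)).
lia.
Qed.

Lemma edge_sub_hull (I F : {set T}) : F \in H -> I \subset F -> F \subset hull I.
Proof.
move=> FH sIF; apply/subsetP=> x xF; rewrite /hull in_setU -implyNb.
by apply/implyP=> xNI; apply/vtx_linkP; exists F.
Qed.

Lemma hull_edge (I X : {set T}) :
  I \in shadow i H -> I \subset X -> X \subset hull I -> #|X| = s -> X \in H.
Proof.
move=> IH sIX sXhull cardX; have [cardI _] := shadowP _ _ _ IH.
have sXIV : X :\: I \subset vtx (link H I).
  apply/subsetP=> x; rewrite inE => /andP[xNI xX].
  by move: (subsetP sXhull x xX); rewrite inE (negbTE xNI).
have cardXI : #|X :\: I| = s - i by rewrite cardsD (setIidPr sIX) cardX cardI.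
have [F [FH sIF eqXF]] := linkP _ _ _ (mem_iso_complete (link_complete IH) sXIV cardXI).
by rewrite -(setID X I) (setIidPr sIX) eqXF -{1}(setIidPr sIF) setID.
Qed.

Lemma edge_through_pair (I : {set T}) b x :
  I \in shadow i H -> b \in vtx (link H I) -> x \in hull I ->
  exists2 F, F \in H & [/\ I \subset F, b \in F & x \in F].
Proof.
move=> IH bV xhull; have [cardI _] := shadowP _ _ _ IH.
set V := vtx (link H I).
have cardV : #|V| = r - i := card_vtx_iso_complete (link_complete IH).
have [|Y [sbxY sYV cardY]] :=
  @exists_subset_between _ ([set b; x] :&: V) V (s - i) (subsetIr _ _).
  rewrite cardV (leq_trans (subset_leq_card (subsetIl _ _))) ?cards2 //; lia.
exists (I :|: Y).
  apply: hull_edge IH (subsetUl _ _) (setUS _ sYV) _.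
  by rewrite (card_setU_vtx_link sYV) cardI cardY; lia.
split; first exact: subsetUl.
  by apply/setUP; right; apply: (subsetP sbxY); rewrite !inE eqxx.
move: xhull; rewrite inE => /orP[xI|xV]; apply/setUP; [by left | right].
by apply: (subsetP sbxY); rewrite !inE eqxx orbT.
Qed.

Lemma exchange_shadow_hull (I : {set T}) a b :
  I \in shadow i H -> a \in I -> b \in vtx (link H I) ->
  b |: (I :\ a) \in shadow i H /\ hull (b |: (I :\ a)) = hull I.
Proof.
move=> IH aI bV; have [cardI _] := shadowP _ _ _ IH.
have bNI := notin_vtx_link bV.
have sI'F (F : {set T}) : I \subset F -> b \in F -> b |: (I :\ a) \subset F.
  by move=> sIF bF; rewrite subUset sub1set bF (subset_trans (subsetDl _ _)).
have I'H : b |: (I :\ a) \in shadow i H.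
  have bhull : b \in hull I by rewrite /hull in_setU bV orbT.
  have [F FH [sIF bF _]] := edge_through_pair IH bV bhull.
  apply/shadowP; split; last by exists F; rewrite ?sI'F.
  by rewrite cardsU1 !inE negb_and bNI orbT; move: (cardsD1 a I); rewrite aI cardI; lia.
split=> //; apply/esym/eqP; rewrite eqEcard card_hull // card_hull // leqnn andbT.
apply/subsetP=> x xhull; rewrite /hull in_setU -implyNb; apply/implyP=> xNI'.
have [F FH [sIF bF xF]] := edge_through_pair IH bV xhull.
by apply/vtx_linkP; exists F; rewrite ?sI'F.
Qed.

Lemma subset_hull_shadow (I J : {set T}) :
  I \in shadow i H -> J \subset hull I -> #|J| = i ->
  J \in shadow i H /\ hull J = hull I.
Proof.
have [n] := ubnP #|J :\: I|; elim: n I => // n IHn I ltJIn IH sJhull cardJ.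
have [cardI _] := shadowP _ _ _ IH.
have [/eqP|[b]] := set_0Vmem (J :\: I).
  rewrite setD_eq0 => sJI.
  by have -> : J = I by apply/eqP; rewrite eqEcard sJI cardI cardJ /=.
rewrite inE => /andP[bNI bJ].
have [a] : exists a, a \in I :\: J.
  apply/set0Pn; rewrite -card_gt0 cardsD setIC.
  by move: (cardsD J I) (cardsD1 b (J :\: I)); rewrite !inE bNI bJ cardI cardJ; lia.
rewrite inE => /andP[aNJ aI].
have bV : b \in vtx (link H I).
  by move: (subsetP sJhull b bJ); rewrite /hull in_setU (negbTE bNI).
have [I'H hullI'] := exchange_shadow_hull IH aI bV.
have JI'E : J :\: (b |: (I :\ a)) = (J :\: I) :\ b.
  apply/setP=> x; rewrite !inE.
  by case: (eqVneq x a) => [->|_]; rewrite ?(negbTE aNJ) ?andbF //= negb_or andbA.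
rewrite -hullI'; apply: IHn => //; last by rewrite hullI'.
by move: (cardsD1 b (J :\: I)); rewrite JI'E inE bNI bJ; lia.
Qed.

Lemma hulls_packing : packing i r [set hull I | I in shadow i H].
Proof.
split=> [_ /imsetP[I IH ->]|_ _ /imsetP[I IH ->] /imsetP[I' I'H ->]].
  exact: card_hull.
apply: contraR; rewrite -leqNgt => /exists_subset_card[J [sJ cardJ]].
have [_ <-] := subset_hull_shadow IH (subset_trans sJ (subsetIl _ _)) cardJ.
by have [_ <-] := subset_hull_shadow I'H (subset_trans sJ (subsetIr _ _)) cardJ.
Qed.

Hypothesis H_uniform : uniform s H.

Lemma shadow_hulls : H = shadow s [set hull I | I in shadow i H].
Proof.
have le_i_s : i <= s by lia.
apply/setP=> X; apply/idP/idP => [XH|].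
  have cardX := H_uniform XH.
  have [J [sJX cardJ]] := @exists_subset_card _ X i (ltac:(lia)).
  have JH : J \in shadow i H by apply/shadowP; split=> //; exists X.
  rewrite inE cardX eqxx; apply/exists_inP; exists (hull J); first exact: imset_f.
  exact: edge_sub_hull.
rewrite inE => /andP[/eqP cardX /exists_inP[_ /imsetP[I IH ->] sXhull]].
have [J [sJX cardJ]] := @exists_subset_card _ X i (ltac:(lia)).
have [JH hullJ] := subset_hull_shadow IH (subset_trans sJX sXhull) cardJ.
by apply: hull_edge JH sJX _ cardX; rewrite hullJ.
Qed.

End PackingShadow.

Theorem mainTheorem13 (T : finType) (i s r : nat) (H : {set {set T}}) :
  1 <= i -> i + 2 <= s -> s <= r ->
  uniform s H ->
  maxdeg_le H i 'C(r - i, s - i) ->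
  (forall I : {set T}, I \in shadow i H -> iso_complete (link H I) (s - i) (r - i)) ->
  exists A : {set {set T}}, packing i r A /\ H = shadow s A.
Proof.
move=> _ le_i2_s le_s_r H_uniform _ link_complete.
exists [set hull H I | I in shadow i H].
split; first exact: hulls_packing link_complete.
exact: shadow_hulls link_complete H_uniform.
Qed.
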